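(* Let $a,c,p\in\mathbb{C}$ with $-c\notin\mathbb{N}\cup\{0\}$ and $c\neq2$. Write $\sin(pz)M(a,c;z)=\sum_{n=0}^\infty u_nz^n$, $z\in\mathbb{C}$. Then $u_0=0$, $u_1=p$, $u_2=\frac{ap}{c}$, $u_3=\frac{a(a+1)p}{2c(c+1)}-\frac{p^3}{6}$, $u_4=\frac{a(a+1)(a+2)p}{6c(c+1)(c+2)}-\frac{ap^3}{6c}$, $u_5=-\frac{a(a+1)p^3}{12c(c+1)}+\frac{a(a+1)(a+2)(a+3)p}{24c(c+1)(c+2)(c+3)}+\frac{p^5}{120}$, and for all integers $n\ge5$, \[ u_{n+1}=\sum_{i=0}^5\beta_i(n)u_{n-i}, \] where, with $D(n)=(c-2)c\,n(n+1)(c+n-1)(c+n)$, \[ \beta_0(n)=\frac{2\left(a\left(c^2-2cn+c-2(n-2)^2\right)+c(n-1)(2c+n-5)\right)}{(c-2)c(n+1)(c+n)}, \] \[ \beta_1(n)=\frac{1}{D(n)}\Big[-(n-4)(n-3)(n-2)(n-1)(4p^2+1)+2(n-3)(n-2)(n-1)\big(4a-c(4p^2+3)\big) +(n-2)(n-1)\big(8a^2+a(4c+6)-6c((c-2)p^2+c)+c\big) +2(n-1)\big(a^2(4c-2)-3a(c-1)c+c(-c^2+c+2)p^2\big) -(c-2)\big(a^2(c+2)-ac+c^2(c+1)p^2\big)\Big], \] \[ \beta_2(n)=\frac{1}{D(n)}\Big[-2p^2(c-3)\big(a(3c+8)-2c^2+c-32\big)+2p^2\big(n(-10a+c(3c-31)+104)+6(c-6)n^2+4n^3\big)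 -2(a+n-3)\big(2a^2-a(c-2n+3)-(n-2)(2c+n-4)\big)\Big], \] \[ \beta_3(n)=-\frac{1}{D(n)}\Big[p^2\big(12a^2-2a(6c+5)+c(6c-1)\big)+2(n-3)\big(a+c(4p^2+3)p^2\big) +(a-1)a+5(c-2)cp^4+(n-4)(n-3)(8p^4+6p^2+1)\Big], \] \[ \beta_4(n)=\frac{2p^2\left(p^2(-6a+5c+4(n-4))-3a+2c+n-4\right)}{D(n)},\qquad \beta_5(n)=-\frac{p^2(4p^4+5p^2+1)}{D(n)}. \]
   Context: For $a\in\mathbb{C}$, $(a)_n=a(a+1)\cdots(a+n-1)$ denotes the Pochhammer symbol, with $(a)_0=1$. For $a,c\in\mathbb{C}$ with $-c\notin\mathbb{N}\cup\{0\}$, the confluent hypergeometric (Kummer) function is $M(a,c;z)=\sum_{n=0}^\infty \frac{(a)_n}{(c)_n\,n!}z^n$, $z\in\mathbb{C}$. *)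

From mathcomp Require Import all_boot all_order all_algebra.
From mathcomp Require Import complex.
From mathcomp Require Import reals.
Set Implicit Arguments. Unset Strict Implicit. Unset Printing Implicit Defensive.
Import Order.TTheory GRing.Theory Num.Theory.
Local Open Scope ring_scope.

Section Defs.
Variable C : fieldType.

Definition poch (a : C) (n : nat) : C := \prod_(i < n) (a + i%:R).

(* n-th Maclaurin coefficient of the Kummer function M(a,c;z) *)
Definition kummer_coef (a c : C) (n : nat) : C :=
  poch a n / (poch c n * (n`!)%:R).

Definition sin_coef (p : C) (k : nat) : C :=
  if odd k then (-1) ^+ k./2 * p ^+ k / (k`!)%:R else 0.

Definition u_coef (a c p : C) (n : nat) : C :=
  \sum_(k < n.+1) sin_coef p k * kummer_coef a c (n - k).

Definition Dn (c : C) (n : nat) : C :=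
  let N := n%:R in (c - 2) * c * N * (N + 1) * (c + N - 1) * (c + N).

Definition beta0 (a c : C) (n : nat) : C :=
  let N := n%:R in
  2 * (a * (c ^+ 2 - 2 * c * N + c - 2 * (N - 2) ^+ 2) + c * (N - 1) * (2 * c + N - 5))
  / ((c - 2) * c * (N + 1) * (c + N)).

Definition beta1 (a c p : C) (n : nat) : C :=
  let N := n%:R in
  (- (N - 4) * (N - 3) * (N - 2) * (N - 1) * (4 * p ^+ 2 + 1)
   + 2 * (N - 3) * (N - 2) * (N - 1) * (4 * a - c * (4 * p ^+ 2 + 3))
   + (N - 2) * (N - 1) * (8 * a ^+ 2 + a * (4 * c + 6) - 6 * c * ((c - 2) * p ^+ 2 + c) + c)
   + 2 * (N - 1) * (a ^+ 2 * (4 * c - 2) - 3 * a * (c - 1) * c + c * (- c ^+ 2 + c + 2) * p ^+ 2)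
   - (c - 2) * (a ^+ 2 * (c + 2) - a * c + c ^+ 2 * (c + 1) * p ^+ 2))
  / Dn c n.

Definition beta2 (a c p : C) (n : nat) : C :=
  let N := n%:R in
  (- 2 * p ^+ 2 * (c - 3) * (a * (3 * c + 8) - 2 * c ^+ 2 + c - 32)
   + 2 * p ^+ 2 * (N * (- 10 * a + c * (3 * c - 31) + 104) + 6 * (c - 6) * N ^+ 2 + 4 * N ^+ 3)
   - 2 * (a + N - 3) * (2 * a ^+ 2 - a * (c - 2 * N + 3) - (N - 2) * (2 * c + N - 4)))
  / Dn c n.

Definition beta3 (a c p : C) (n : nat) : C :=
  let N := n%:R in
  - ((p ^+ 2 * (12 * a ^+ 2 - 2 * a * (6 * c + 5) + c * (6 * c - 1))
      + 2 * (N - 3) * (a + c * (4 * p ^+ 2 + 3) * p ^+ 2)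
      + (a - 1) * a + 5 * (c - 2) * c * p ^+ 4
      + (N - 4) * (N - 3) * (8 * p ^+ 4 + 6 * p ^+ 2 + 1))
     / Dn c n).

Definition beta4 (a c p : C) (n : nat) : C :=
  let N := n%:R in
  2 * p ^+ 2 * (p ^+ 2 * (- 6 * a + 5 * c + 4 * (N - 4)) - 3 * a + 2 * c + N - 4) / Dn c n.

Definition beta5 (c p : C) (n : nat) : C :=
  - (p ^+ 2 * (4 * p ^+ 4 + 5 * p ^+ 2 + 1) / Dn c n).

End Defs.

(* Let Y and V be the generating functions of sin(pz) M and cos(pz) M, where
   M = M(a,c;z) solves Kummer's equation z M'' + (c - z) M' - a M = 0.  Since
   sin' = p cos and cos' = -p sin, one finds
     z Y'' = p^2 z Y + 2 p z V' + (z - c) Y' - p (z - c) V + a Y,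
   and the same identity with (Y, V) replaced by (V, -Y).  On coefficients these
   are the two instances of the coupled recurrence [coupled] below.  Eliminating
   V between five shifts of the first and four shifts of the second leaves a
   six-term recurrence for the coefficients of Y alone, which is the stated one
   multiplied by Dn. *)

From mathcomp Require Import all_boot all_order all_algebra.
From mathcomp Require Import complex.
From mathcomp Require Import reals.
From mathcomp Require Import ring.
Import Order.TTheory GRing.Theory Num.Theory.
Local Open Scope ring_scope.

Section Convolution.
Context {R : comRingType}.
Implicit Types f g h : nat -> R.

Definition conv f g (n : nat) : R := \sum_(k < n.+1) f k * g (n - k)%N.

(* Coefficients of z F'(z), where F is the generating function of f. *)
Definition theta f (k : nat) : R := k%:R * f k.

Lemma theta_conv f g n : theta (conv f g) n = conv (theta f) g n + conv f (theta g) n.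
Proof.
rewrite /theta /conv mulr_sumr -big_split /=; apply: eq_bigr => [[k hk]] _ /=.
rewrite -{1}(subnKC (hk : (k <= n)%N)) natrD; ring.
Qed.

Lemma conv_shiftl f1 f2 g n :
  f2 0%N = 0 -> (forall i, f2 i.+1 = f1 i) -> conv f2 g n.+1 = conv f1 g n.
Proof.
move=> f20 f2S; rewrite /conv big_ord_recl f20 mul0r add0r.
by apply: eq_bigr => i _; rewrite f2S subSS.
Qed.

Lemma conv_shiftr f g1 g2 n :
  g2 0%N = 0 -> (forall i, g2 i.+1 = g1 i) -> conv f g2 n.+1 = conv f g1 n.
Proof.
move=> g20 g2S; rewrite /conv big_ord_recr /= subnn g20 mulr0 addr0.
by apply: eq_bigr => [[i hi]] _; rewrite subSn // g2S.
Qed.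

Lemma convDr f g h n : conv f (fun i => g i + h i) n = conv f g n + conv f h n.
Proof. by rewrite /conv -big_split; apply: eq_bigr => i _; rewrite mulrDr. Qed.

Lemma convZl (x : R) f g n : conv (fun i => x * f i) g n = x * conv f g n.
Proof. by rewrite /conv mulr_sumr; apply: eq_bigr => i _; rewrite mulrA. Qed.

Lemma convZr (x : R) f g n : conv f (fun i => x * g i) n = x * conv f g n.
Proof. by rewrite /conv mulr_sumr; apply: eq_bigr => i _; rewrite mulrCA. Qed.

Lemma convNl f g n : conv (fun i => - f i) g n = - conv f g n.
Proof. by rewrite /conv -sumrN; apply: eq_bigr => i _; rewrite mulNr. Qed.

Lemma theta_conv_deriv (q : R) f g h n :
  (forall k, k.+1%:R * f k.+1 = q * g k) ->
  theta (conv f h) n.+1 = q * conv g h n + conv f (theta h) n.+1.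
Proof.
move=> df; rewrite theta_conv -convZl (@conv_shiftl (fun i => q * g i)) //.
by rewrite /theta mul0r.
Qed.

End Convolution.

Section CoupledRecurrence.
Context {R : comRingType} (a c p : R).
Implicit Types f g m U W : nat -> R.

Definition coupled_resid U W (k : nat) : R :=
  k.+2%:R * (k.+1%:R + c) * U k.+2
  - (p * (2 * k.+1%:R + c) * W k.+1 + p ^+ 2 * U k + (k.+1%:R + a) * U k.+1 - p * W k).

Definition coupled U W := forall k, coupled_resid U W k = 0.

Lemma coupled_conv f g m :
  (forall k, k.+1%:R * f k.+1 = p * g k) ->
  (forall k, k.+1%:R * g k.+1 = - p * f k) ->
  (forall k, k.+1%:R * (k%:R + c) * m k.+1 = (k%:R + a) * m k) ->
  coupled (conv f m) (conv g m).
Proof.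
move=> df dg dm k; apply/eqP; rewrite subr_eq0; apply/eqP.
set U := conv f m; set W := conv g m.
set T := conv f (theta m); set V := conv g (theta m).
have dU j : j.+1%:R * U j.+1 = p * W j + T j.+1 by apply: theta_conv_deriv.
have dW j : j.+1%:R * W j.+1 = - p * U j + V j.+1 by apply: theta_conv_deriv.
have dT : k.+2%:R * T k.+2 = p * V k.+1 + conv f (theta (theta m)) k.+2.
  exact: theta_conv_deriv.
have kummerT : conv f (theta (theta m)) k.+2 + (c - 1) * T k.+2 = T k.+1 + a * U k.+1.
  rewrite -convZr -convDr -convZr -convDr; apply: conv_shiftr => [|i].
    by rewrite /theta !mul0r mulr0 addr0.
  transitivity (i.+1%:R * (i%:R + c) * m i.+1); first by rewrite /theta; ring.
  by rewrite dm /theta; ring.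
transitivity ((k.+1%:R + c) * (k.+2%:R * U k.+2)); first ring.
rewrite dU.
have -> : (k.+1%:R + c) * (p * W k.+1 + T k.+2)
  = (k.+1%:R + c) * p * W k.+1 + k.+2%:R * T k.+2 + (c - 1) * T k.+2 by ring.
rewrite dT -!addrA kummerT.
have -> : V k.+1 = k.+1%:R * W k.+1 + p * U k by rewrite dW; ring.
have -> : T k.+1 = k.+1%:R * U k.+1 - p * W k by rewrite dU; ring.
ring.
Qed.

End CoupledRecurrence.

Section Elimination.
Context {F : fieldType} {a c p : F} {U W : nat -> F}.
Hypotheses (hUW : coupled a c p U W) (hWU : coupled a c p W (fun j => - U j)).

Lemma coupled_elim n : (5 <= n)%N -> Dn c n != 0 ->
  U n.+1 = beta0 a c n * U n + beta1 a c p n * U (n - 1)%N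
           + beta2 a c p n * U (n - 2)%N + beta3 a c p n * U (n - 3)%N
           + beta4 a c p n * U (n - 4)%N + beta5 c p n * U (n - 5)%N.
Proof.
case: n => [|[|[|[|[|k]]]]] // _ hD; rewrite !subSS !subn0.
have := hD; rewrite /Dn !mulf_eq0 !negb_or.
move=> /andP[/andP[/andP[/andP[/andP[c2 c0] N0] N1] cN1] cN].
apply/eqP; rewrite -subr_eq0; apply/eqP; apply: (mulfI hD); rewrite mulr0.
pose N : F := k.+4.+1%:R.
(* The multipliers come from eliminating W from these nine relations, a linear
   algebra computation over Q(a, c, p, N). *)
transitivity (
    (c - 2) * c * N * (c + N - 1) * coupled_resid a c p U W k.+4
  + (- a * c ^+ 2 + 4 * a * c * N - 4 * a * c + 4 * a * N ^+ 2 - 16 * a * N + 16 * a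
     - 3 * c ^+ 2 * N + 4 * c ^+ 2 - 2 * c * N ^+ 2 + 10 * c * N - 10 * c)
    * coupled_resid a c p U W k.+3
  + (- 4 * a ^+ 2 + 2 * a * c - 4 * a * N + 10 * a - c ^+ 2 * p ^+ 2 + 4 * c * p ^+ 2 * N
     - 10 * c * p ^+ 2 + 3 * c * N - 8 * c + 4 * p ^+ 2 * N ^+ 2 - 28 * p ^+ 2 * N
     + 48 * p ^+ 2 + N ^+ 2 - 7 * N + 12)
    * coupled_resid a c p U W k.+2
  + (- 8 * a * p ^+ 2 - a + 2 * c * p ^+ 2 - 4 * p ^+ 2 * N + 16 * p ^+ 2 - N + 4)
    * coupled_resid a c p U W k.+1
  + (- 4 * p ^+ 4 - p ^+ 2) * coupled_resid a c p U W k
  + (c ^+ 3 * p + 2 * c ^+ 2 * p * N - 2 * c ^+ 2 * p - 4 * c * p * N)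
    * coupled_resid a c p W (fun j => - U j) k.+3
  + (4 * a * c * p + 8 * a * p * N - 16 * a * p - 3 * c ^+ 2 * p - 4 * c * p * N + 10 * c * p)
    * coupled_resid a c p W (fun j => - U j) k.+2
  + (- 4 * a * p + 4 * c * p ^+ 3 + 3 * c * p + 8 * p ^+ 3 * N - 32 * p ^+ 3 + 2 * p * N
     - 8 * p)
    * coupled_resid a c p W (fun j => - U j) k.+1
  + (- 4 * p ^+ 3 - p) * coupled_resid a c p W (fun j => - U j) k).
  rewrite /N /coupled_resid /beta0 /beta1 /beta2 /beta3 /beta4 /beta5 /Dn /=.
  field.
  have -> : 5 + k%:R = N by rewrite /N; ring.
  by rewrite cN cN1 N1 N0 c0 c2.
by rewrite !hUW !hWU !mulr0 !addr0.
Qed.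

End Elimination.

Section Coefficients.
Context {F : numFieldType}.
Implicit Types a c p : F.

Definition cos_coef p (k : nat) : F :=
  if odd k then 0 else (-1) ^+ k./2 * p ^+ k / (k`!)%:R.

Lemma fact_neq0 k : (k`!)%:R != 0 :> F.
Proof. by rewrite pnatr_eq0 -lt0n fact_gt0. Qed.

Lemma natS_neq0 k : k.+1%:R != 0 :> F.
Proof. by rewrite pnatr_eq0. Qed.

Lemma sin_coefS p k : k.+1%:R * sin_coef p k.+1 = p * cos_coef p k.
Proof.
rewrite /sin_coef /cos_coef /=; case ok: (odd k) => /=; first by rewrite !mulr0.
rewrite uphalf_half ok add0n factS natrM exprS.
by field; rewrite fact_neq0 addrC natr1 natS_neq0.
Qed.

Lemma cos_coefS p k : k.+1%:R * cos_coef p k.+1 = - p * sin_coef p k.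
Proof.
rewrite /sin_coef /cos_coef /=; case ok: (odd k) => /=; last by rewrite !mulr0.
rewrite uphalf_half ok add1n factS natrM !exprS.
by field; rewrite fact_neq0 addrC natr1 natS_neq0.
Qed.

Lemma pochS (x : F) n : poch x n.+1 = poch x n * (x + n%:R).
Proof. by rewrite /poch big_ord_recr. Qed.

Lemma poch_neq0 (x : F) n : (forall j, x + j%:R != 0) -> poch x n != 0.
Proof.
move=> hx; elim: n => [|n IH]; first by rewrite /poch big_ord0 oner_neq0.
by rewrite pochS mulf_neq0.
Qed.

Lemma kummer_coefS a c k : (forall j, c + j%:R != 0) ->
  k.+1%:R * (k%:R + c) * kummer_coef a c k.+1 = (k%:R + a) * kummer_coef a c k.
Proof.
move=> hc; rewrite /kummer_coef !pochS factS natrM.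
by field; rewrite fact_neq0 poch_neq0 // addrC natr1 natS_neq0 hc.
Qed.

End Coefficients.

Section SinKummer.
Context {F : numFieldType} {a c p : F}.
Hypothesis hc : forall j : nat, c + j%:R != 0.

Lemma c_neq0 : c != 0. Proof. by have := hc 0; rewrite addr0. Qed.

Ltac eval_u_coef :=
  rewrite /u_coef !big_ord_recr big_ord0 /= /sin_coef /kummer_coef /poch /=;
  rewrite ?big_ord_recr ?big_ord0 /= ?subSS ?subn0 ?subnn ?factS ?fact0;
  field; rewrite ?c_neq0 ?(hc 1) ?(hc 2) ?(hc 3) ?(hc 4).

Lemma u_coef0 : u_coef a c p 0 = 0.
Proof. by eval_u_coef. Qed.

Lemma u_coef1 : u_coef a c p 1 = p.
Proof. by eval_u_coef. Qed.

Lemma u_coef2 : u_coef a c p 2 = a * p / c.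
Proof. by eval_u_coef. Qed.

Lemma u_coef3 : u_coef a c p 3 = a * (a + 1) * p / (2 * c * (c + 1)) - p ^+ 3 / 6.
Proof. by eval_u_coef. Qed.

Lemma u_coef4 : u_coef a c p 4 =
  a * (a + 1) * (a + 2) * p / (6 * c * (c + 1) * (c + 2)) - a * p ^+ 3 / (6 * c).
Proof. by eval_u_coef. Qed.

Lemma u_coef5 : u_coef a c p 5 =
  - (a * (a + 1) * p ^+ 3 / (12 * c * (c + 1)))
  + a * (a + 1) * (a + 2) * (a + 3) * p / (24 * c * (c + 1) * (c + 2) * (c + 3))
  + p ^+ 5 / 120.
Proof. by eval_u_coef. Qed.

Let W := conv (cos_coef p) (kummer_coef a c).

Lemma coupled_sin_kummer : coupled a c p (u_coef a c p) W.
Proof.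
apply: coupled_conv => k; [exact: sin_coefS | exact: cos_coefS | exact: kummer_coefS].
Qed.

Lemma coupled_cos_kummer : coupled a c p W (fun j => - u_coef a c p j).
Proof.
move=> k; rewrite /coupled_resid -!convNl; apply: coupled_conv => {k} k.
- by rewrite cos_coefS mulrN mulNr.
- by rewrite mulrN sin_coefS mulNr.
- exact: kummer_coefS.
Qed.

Lemma Dn_neq0 n : c != 2 -> (0 < n)%N -> Dn c n != 0.
Proof.
case: n => // n c2 _.
have c2' : c - 2 != 0 by rewrite subr_eq0.
have cn : c + n.+1%:R - 1 != 0 by rewrite -natr1 addrA addrK hc.
by rewrite /Dn !mulf_neq0 ?c_neq0 ?natr1 ?natS_neq0 ?hc.
Qed.

Lemma u_coef_rec : c != 2 -> forall n, (5 <= n)%N ->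
  u_coef a c p n.+1 = beta0 a c n * u_coef a c p n + beta1 a c p n * u_coef a c p (n - 1)%N
    + beta2 a c p n * u_coef a c p (n - 2)%N + beta3 a c p n * u_coef a c p (n - 3)%N
    + beta4 a c p n * u_coef a c p (n - 4)%N + beta5 c p n * u_coef a c p (n - 5)%N.
Proof.
move=> c2 n hn; apply: (coupled_elim coupled_sin_kummer coupled_cos_kummer n hn).
by apply: Dn_neq0; case: n hn.
Qed.

End SinKummer.

Local Open Scope complex_scope.

Theorem theorem2p7 (R : realType) (a c p : R[i])
  (hc : forall k : nat, c != - (k%:R))
  (hc2 : c != 2) :
  let u := u_coef a c p in
  u 0%N = 0 /\
      u 1%N = p /\
      u 2%N = a * p / c /\
      u 3%N = a * (a + 1) * p / (2 * c * (c + 1)) - p ^+ 3 / 6 /\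
      u 4%N = a * (a + 1) * (a + 2) * p / (6 * c * (c + 1) * (c + 2))
              - a * p ^+ 3 / (6 * c) /\
      u 5%N = - (a * (a + 1) * p ^+ 3 / (12 * c * (c + 1)))
              + a * (a + 1) * (a + 2) * (a + 3) * p
                / (24 * c * (c + 1) * (c + 2) * (c + 3))
              + p ^+ 5 / 120 /\
    forall n : nat, (5 <= n)%N ->
      u n.+1 = beta0 a c n * u n + beta1 a c p n * u (n - 1)%N
               + beta2 a c p n * u (n - 2)%N + beta3 a c p n * u (n - 3)%N
               + beta4 a c p n * u (n - 4)%N + beta5 c p n * u (n - 5)%N.
Proof.
have hc' : forall j : nat, c + j%:R != 0 by move=> j; rewrite addr_eq0.
move=> u; split; first exact: u_coef0.
split; first exact: u_coef1.
split; first exact: u_coef2 hc'.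
split; first exact: u_coef3 hc'.
split; first exact: u_coef4 hc'.
split; first exact: u_coef5 hc'.
exact: u_coef_rec hc' hc2.
Qed.
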